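(* Consider the error system with adaptive control $u_{\mathrm{adapt}}=-\hat W^\top\beta(e)$ and static update law $\hat W(t)=K\beta(e(t))B^\top Pe(t)$, where $K=\alpha K_{\mathrm b}$ with $\alpha>0$ and $0<K_{\mathrm b}\in\mathrm S^{n_\beta}$, and $0<P,Q\in\mathrm S^n$ satisfy $Q=-(A^\top P+PA)$. Assume $\mathscr b:=\inf_{x\in\mathbb R^n}\beta(x)^\top K_{\mathrm b}\beta(x)>0$ and $|\eta(t)|\le\eta^\star$ for all $t\ge0$. Let $\gamma\in[0,1)$ and $\mu>0$, and define $$r_{\mathrm e}=\sqrt{\frac{\lambda_{\max}(P)}{g(\alpha\mathscr b\gamma,Q,PB)\,\lambda_{\min}(P)}}\;\sqrt{\frac{W^\top K_{\mathrm b}^{-1}W+\frac{{\eta^\star}^2}{\mathscr b(1-\gamma)}}{\alpha}+\mu}.$$ Then for every closed-loop solution there exists $T_{\mathrm e}\ge0$ such that $\|e(t)\|\le r_{\mathrm e}$ for all $t\ge T_{\mathrm e}$.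
   Context: Error system: $\dot e=Ae+B(u_{\mathrm{adapt}}+W^\top\beta(e)+\eta)$ with $e(t)\in\mathbb R^n$, $A\in\mathbb R^{n\times n}$ Hurwitz, $B\in\mathbb R^n$, $\beta:\mathbb R^n\to\mathbb R^{n_\beta}$ known, $W\in\mathbb R^{n_\beta}$ unknown constant, $\eta(t)\in\mathbb R$; Assumption 1: there is a non-decreasing $\alpha_\beta:[0,\infty)\to[0,\infty)$ with $\|\beta(x)\|\le\alpha_\beta(\|x\|)$ for all $x$. Closed-loop solutions are assumed to exist on $[0,\infty)$. $\mathrm S^k$: real symmetric $k\times k$ matrices. $g(\phi,Q,v)=\lambda_{\min}(Q+\phi\,vv^\top)$. *)

From HB Require Import structures.
From mathcomp Require Import all_boot all_order all_algebra.
From mathcomp Require Import all_classical all_reals all_analysis.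
From mathcomp Require Import complex.
Set Implicit Arguments. Unset Strict Implicit. Unset Printing Implicit Defensive.
Import Order.TTheory GRing.Theory Num.Theory.
Import numFieldNormedType.Exports.
Local Open Scope classical_set_scope.
Local Open Scope ring_scope.

Section Defs.
Variable R : realType.

Definition dotc (k : nat) (x y : 'cV[R]_k) : R := (x^T *m y) 0 0.

Definition enorm (k : nat) (x : 'cV[R]_k) : R := Num.sqrt (dotc x x).

Definition symmetric (k : nat) (M : 'M[R]_k) : Prop := M^T = M.

Definition posdef (k : nat) (M : 'M[R]_k) : Prop :=
  symmetric M /\ forall x : 'cV[R]_k, x != 0 -> 0 < dotc x (M *m x).

Definition lambda_min (k : nat) (M : 'M[R]_k) : R := inf [set a : R | eigenvalue M a].
Definition lambda_max (k : nat) (M : 'M[R]_k) : R := sup [set a : R | eigenvalue M a].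

Definition gfun (k : nat) (phi : R) (Q : 'M[R]_k) (v : 'cV[R]_k) : R :=
  lambda_min (Q + phi *: (v *m v^T)).

(* Hurwitz: all (complex) eigenvalues, i.e. roots of the characteristic
   polynomial, have negative real part *)
Definition hurwitz (k : nat) (A : 'M[R]_k) : Prop :=
  forall z : complex R, root (map_poly (fun c : R => Complex c 0) (char_poly A)) z ->
    complex.Re z < 0.

Definition nondecreasing_on_nonneg (f : R -> R) : Prop :=
  forall x y : R, 0 <= x -> x <= y -> f x <= f y.

End Defs.

From Pilot Require Import Defs.
From HB Require Import structures.
From mathcomp Require Import all_boot all_order all_algebra.
From mathcomp Require Import all_classical all_reals all_analysis.
From mathcomp Require Import complex.
From mathcomp Require Import ring lra.
Import Order.TTheory GRing.Theory Num.Theory.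
Import numFieldNormedType.Exports.
Local Open Scope classical_set_scope.
Local Open Scope ring_scope.

(* With s = B^T P e and q = beta(e)^T Kb beta(e) >= b, the Lyapunov function V = e^T P e
   satisfies V' = - e^T Q e + 2 s (- alpha s q + W^T beta(e) + eta).  Young's inequality
   weighted by Kb absorbs the W-term into half of the damping 2 alpha s^2 q at the price
   W^T Kb^-1 W / alpha, and the eta-term into the fraction (1 - gamma) of what is left of
   alpha b s^2 at the price eta*^2 / (alpha b (1 - gamma)).  The retained alpha b gamma s^2
   combines with e^T Q e into e^T (Q + alpha b gamma P B B^T P) e >= g |e|^2, so
   V' <= - (g / lambda_max P) V + C.  Hence V ultimately drops below
   lambda_max P (C + mu) / g, and lambda_min P |e|^2 <= V gives the radius r_e. *)

Section DotProduct.
Context {R : realType} {k : nat}.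
Implicit Types (x y z : 'cV[R]_k) (a : R).

Lemma dotcE x y : dotc x y = \sum_i x i 0 * y i 0.
Proof. by rewrite /dotc !mxE; apply: eq_bigr => i _; rewrite mxE. Qed.

Lemma dotcC x y : dotc x y = dotc y x.
Proof. by rewrite !dotcE; apply: eq_bigr => i _; rewrite mulrC. Qed.

Lemma dotcDl x y z : dotc (x + y) z = dotc x z + dotc y z.
Proof. by rewrite !dotcE -big_split; apply: eq_bigr => i _; rewrite mxE mulrDl. Qed.

Lemma dotcDr x y z : dotc z (x + y) = dotc z x + dotc z y.
Proof. by rewrite dotcC dotcDl !(dotcC z). Qed.

Lemma dotcZl a x z : dotc (a *: x) z = a * dotc x z.
Proof. by rewrite !dotcE mulr_sumr; apply: eq_bigr => i _; rewrite mxE mulrA. Qed.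

Lemma dotcZr a x z : dotc z (a *: x) = a * dotc z x.
Proof. by rewrite dotcC dotcZl dotcC. Qed.

Lemma dotcNl x z : dotc (- x) z = - dotc x z.
Proof. by rewrite -scaleN1r dotcZl mulN1r. Qed.

Lemma dotcNr x z : dotc z (- x) = - dotc z x.
Proof. by rewrite -scaleN1r dotcZr mulN1r. Qed.

Lemma dotcBl x y z : dotc (x - y) z = dotc x z - dotc y z.
Proof. by rewrite dotcDl dotcNl. Qed.

Lemma dotcBr x y z : dotc z (x - y) = dotc z x - dotc z y.
Proof. by rewrite dotcDr dotcNr. Qed.

Lemma dotc0l x : dotc 0 x = 0.
Proof. by rewrite dotcE big1 // => i _; rewrite mxE mul0r. Qed.

Lemma dotc0r x : dotc x 0 = 0.
Proof. by rewrite dotcC dotc0l. Qed.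

Lemma dotcc_ge0 x : 0 <= dotc x x.
Proof. by rewrite dotcE; apply: sumr_ge0 => i _; rewrite -expr2 sqr_ge0. Qed.

Lemma dotcc_eq0 x : (dotc x x == 0) = (x == 0).
Proof.
apply/idP/eqP => [|->]; last by rewrite dotc0l.
rewrite dotcE psumr_eq0 => [/allP x0|i _]; last by rewrite -expr2 sqr_ge0.
apply/matrixP => i j; rewrite (ord1 j) mxE.
by have /implyP/(_ isT) := x0 i (mem_index_enum i); rewrite mulf_eq0 orbb => /eqP.
Qed.

Lemma dotcc_gt0 x : (0 < dotc x x) = (x != 0).
Proof. by rewrite lt_def dotcc_ge0 andbT dotcc_eq0. Qed.

Lemma dotc_mulmx l (M : 'M[R]_(k, l)) x (y : 'cV[R]_l) : dotc x (M *m y) = dotc (M^T *m x) y.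
Proof. by rewrite /dotc trmx_mul trmxK mulmxA. Qed.

Lemma dotc_sym (M : 'M[R]_k) x y : M^T = M -> dotc x (M *m y) = dotc (M *m x) y.
Proof. by move=> sM; rewrite dotc_mulmx sM. Qed.

Lemma dotc_CauchySchwarz x y : dotc x y ^+ 2 <= dotc x x * dotc y y.
Proof.
set a := dotc x x; set b := dotc x y; set c := dotc y y.
have [a0|ap] := eqVneq a 0.
  have /eqP x0 : x == 0 by rewrite -dotcc_eq0 -/a a0.
  by rewrite /b /a x0 !dotc0l expr0n mul0r.
have h : 0 <= dotc (a *: y - b *: x) (a *: y - b *: x) by apply: dotcc_ge0.
rewrite !dotcBl !dotcBr !dotcZl !dotcZr -/a -/c (dotcC y x) -/b in h.
have {}ap : 0 < a by rewrite lt_def ap dotcc_ge0.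
have : 0 <= a * (a * c - b ^+ 2) by rewrite expr2; nra.
by rewrite pmulr_rge0 // subr_ge0 mulrC.
Qed.

End DotProduct.

Section QuadraticForms.
Context {R : realType} {k : nat}.
Implicit Types (x y : 'cV[R]_k).

Lemma mulmx_dotcc_bounded {l} (M : 'M[R]_(l, k)) :
  exists2 c, 0 <= c & forall y, dotc (M *m y) (M *m y) <= c * dotc y y.
Proof.
pose r i : 'cV[R]_k := \col_j M i j.
exists (\sum_i dotc (r i) (r i)); first by apply: sumr_ge0 => i _; apply: dotcc_ge0.
move=> y; rewrite [X in X <= _]dotcE mulr_suml; apply: ler_sum => i _.
have -> : (M *m y) i 0 = dotc (r i) y by rewrite dotcE mxE; apply: eq_bigr => j _; rewrite mxE.
by rewrite -expr2 dotc_CauchySchwarz.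
Qed.

Lemma quadform_bounded (M : 'M[R]_k) :
  exists c, forall x, `|dotc x (M *m x)| <= c * dotc x x.
Proof.
have [c c0 hc] := mulmx_dotcc_bounded M.
exists ((1 + c) / 2) => x; rewrite ler_norml; apply/andP; split.
- have := dotcc_ge0 (x + M *m x); rewrite !dotcDl !dotcDr (dotcC (M *m x) x).
  have := hc x; lra.
- have := dotcc_ge0 (x - M *m x); rewrite !dotcBl !dotcBr (dotcC (M *m x) x).
  have := hc x; lra.
Qed.

Lemma psd_dotcc_mulmx_le (N : 'M[R]_k) : N^T = N -> (forall x, 0 <= dotc x (N *m x)) ->
  exists2 C, 0 < C & forall x, dotc (N *m x) (N *m x) <= C * dotc x (N *m x).
Proof.
move=> sN N_psd; have [c hc] := quadform_bounded N.
have {}hc y : dotc y (N *m y) <= `|c| * dotc y y.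
  apply: le_trans (ler_norm _) (le_trans (hc y) _).
  by rewrite ler_wpM2r ?dotcc_ge0 ?ler_norm.
exists (`|c| + 1); first by rewrite ltr_wpDl.
move=> x; set y := N *m x; set C := `|c| + 1.
have Cp : 0 < C by rewrite ltr_wpDl.
have tp : 0 < C^-1 by rewrite invr_gt0.
have tC : C^-1 * C = 1 by rewrite mulVf // gt_eqF.
have := N_psd (x - C^-1 *: y).
rewrite mulmxBr -scalemxAr !dotcBl !dotcBr !dotcZl !dotcZr (dotc_sym _ x y sN) -/y.
rewrite (dotcC y (N *m x)) -/y.
have hyN : dotc y (N *m y) <= C * dotc y y.
  by apply: le_trans (hc y) _; rewrite ler_wpM2r ?dotcc_ge0 // lerDl.
have hy : C^-1 * (C^-1 * dotc y (N *m y)) <= C^-1 * dotc y y.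
  have : C^-1 * (C^-1 * dotc y (N *m y)) <= C^-1 * (C^-1 * (C * dotc y y)).
    by rewrite !ler_wpM2l ?(ltW tp).
  by rewrite (mulrA _ C) tC mul1r.
move=> h; rewrite -(ler_pM2l tp) mulrA tC mul1r; lra.
Qed.
End QuadraticForms.

Lemma eigenvalue_unitmx {R : fieldType} {k} (M : 'M[R]_k) a :
  eigenvalue M a = (M - a%:M \notin unitmx).
Proof. by rewrite /eigenvalue /eigenspace kermx_eq0 row_free_unit. Qed.

Lemma sym_eigenvector {R : realType} {k} (M : 'M[R]_k) a : M^T = M -> eigenvalue M a ->
  exists2 x : 'cV[R]_k, x != 0 & M *m x = a *: x.
Proof.
move=> sM /eigenvalueP [v hv vn0]; exists v^T; first by rewrite trmx_eq0.
by rewrite -{1}sM -trmx_mul hv linearZ.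
Qed.

Section RayleighQuotient.
Context {R : realType} {k : nat} {M : 'M[R]_k}.
Hypotheses (k_gt0 : (0 < k)%N) (sM : M^T = M).

Let rayleigh := [set dotc x (M *m x) / dotc x x | x in [set x : 'cV[R]_k | x != 0]].

Let has_inf_rayleigh : has_inf rayleigh.
Proof.
split.
  pose o : 'cV[R]_k := const_mx 1.
  exists (dotc o (M *m o) / dotc o o); exists o => //=.
  by apply/negP => /eqP/matrixP/(_ (Ordinal k_gt0) 0); rewrite !mxE => /eqP; rewrite oner_eq0.
have [c hc] := quadform_bounded M.
exists (- c) => _ [x /= xn0 <-].
rewrite ler_pdivlMr ?dotcc_gt0 // mulNr lerNl.
by apply: le_trans (hc x); rewrite -normrN ler_norm.
Qed.

Let m := inf rayleigh.

Let m_le_rayleigh x : m * dotc x x <= dotc x (M *m x).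
Proof.
have [->|xn0] := eqVneq x 0; first by rewrite mulmx0 !dotc0l mulr0.
rewrite -ler_pdivlMr ?dotcc_gt0 //.
by apply: ge_inf; [case: has_inf_rayleigh | exists x].
Qed.

Let m_approx eps : 0 < eps -> exists2 x, x != 0 & dotc x (M *m x) < (m + eps) * dotc x x.
Proof.
move=> eps_gt0; have [_ [x /= xn0 <-] h] := inf_adherent eps_gt0 has_inf_rayleigh.
by exists x => //; rewrite -ltr_pdivrMr ?dotcc_gt0.
Qed.

(* If M - m were invertible, [|x|^2 <= c (M - m) x . x] would contradict [m_approx]. *)
Let m_eigenvalue : eigenvalue M m.
Proof.
rewrite eigenvalue_unitmx; apply/negP; set N := M - m%:M => N_unit.
have NE x : N *m x = M *m x - m *: x by rewrite mulmxBl mul_scalar_mx.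
have sN : N^T = N by rewrite linearB /= sM tr_scalar_mx.
have N_psd x : 0 <= dotc x (N *m x) by rewrite NE dotcBr dotcZr subr_ge0.
have [C C_gt0 hC] := psd_dotcc_mulmx_le N sN N_psd.
have [c c_ge0 hc] := mulmx_dotcc_bounded (invmx N).
have cC_ge0 : 0 <= c * C by rewrite mulr_ge0 // ltW.
have coercive x : dotc x x <= c * C * dotc x (N *m x).
  have := hc (N *m x); rewrite mulKmx // => /le_trans; apply.
  by rewrite -mulrA ler_wpM2l.
pose eps := (2 * (c * C + 1))^-1.
have eps_gt0 : 0 < eps by rewrite invr_gt0 mulr_gt0 // ltr_wpDl.
have eps_inv : eps * (2 * (c * C + 1)) = 1 by rewrite mulVf // gt_eqF // mulr_gt0 // ltr_wpDl.
have [x xn0 hx] := m_approx _ eps_gt0.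
have x_gt0 := xn0; rewrite -dotcc_gt0 in x_gt0.
have : dotc x (N *m x) < eps * dotc x x by rewrite NE dotcBr dotcZr; lra.
have := coercive x; nra.
Qed.

Let m_le_eigenvalue a : eigenvalue M a -> m <= a.
Proof.
move=> /(sym_eigenvector _ _ sM) [x xn0 hx].
by have := m_le_rayleigh x; rewrite hx dotcZr ler_pM2r ?dotcc_gt0.
Qed.

Let lambda_minE : lambda_min M = m.
Proof.
apply/eqP; rewrite eq_le; apply/andP; split.
  by apply: ge_inf; [exists m => a; exact: m_le_eigenvalue | exact: m_eigenvalue].
by apply: lb_le_inf; [exists m; exact: m_eigenvalue | move=> a; exact: m_le_eigenvalue].
Qed.

Lemma lambda_min_le_quadform x : lambda_min M * dotc x x <= dotc x (M *m x).
Proof. by rewrite lambda_minE m_le_rayleigh. Qed.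

Lemma lambda_min_eigenvector : exists2 x : 'cV[R]_k, x != 0 & M *m x = lambda_min M *: x.
Proof. by rewrite lambda_minE; apply: sym_eigenvector sM m_eigenvalue. Qed.

End RayleighQuotient.

Section ExtremalEigenvalues.
Context {R : realType} {k : nat}.
Implicit Types (M : 'M[R]_k) (x : 'cV[R]_k).

Lemma lambda_maxE M : lambda_max M = - lambda_min (- M).
Proof.
rewrite /lambda_max /lambda_min /inf opprK; congr sup.
apply/seteqP; split => a /=.
- move=> /eigenvalueP [v hv vn0]; exists (- a); last by rewrite opprK.
  by apply/eigenvalueP; exists v; rewrite // mulmxN hv scaleNr.
- move=> [b /eigenvalueP [v hv vn0] <-]; apply/eigenvalueP; exists v => //.
  by rewrite scaleNr -hv mulmxN opprK.
Qed.

Hypothesis k_gt0 : (0 < k)%N.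

Lemma quadform_le_lambda_max M x : M^T = M -> dotc x (M *m x) <= lambda_max M * dotc x x.
Proof.
move=> sM; have sNM : (- M)^T = - M by rewrite linearN /= sM.
rewrite lambda_maxE; have := lambda_min_le_quadform k_gt0 sNM x.
rewrite mulNmx dotcNr; lra.
Qed.

Lemma lambda_min_gt0 M : posdef M -> 0 < lambda_min M.
Proof.
move=> [sM M_pd]; have [x xn0 hx] := lambda_min_eigenvector k_gt0 sM.
by have := M_pd x xn0; rewrite hx dotcZr pmulr_lgt0 // dotcc_gt0.
Qed.

Lemma lambda_min_le_max M : M^T = M -> lambda_min M <= lambda_max M.
Proof.
move=> sM; have [x xn0 hx] := lambda_min_eigenvector k_gt0 sM.
have := quadform_le_lambda_max M x sM.
by rewrite hx dotcZr ler_pM2r // dotcc_gt0.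
Qed.

End ExtremalEigenvalues.

Section Derivatives.
Context {R : realType}.

Lemma is_derive_mxE {m n} (f : R -> 'M[R]_(m, n)) (t : R) df i j :
  is_derive t 1 f df -> is_derive t 1 (fun s => f s i j) (df i j).
Proof.
case=> f_der <-.
pose rate (h : R) := h^-1 *: ((f \o shift t) (h *: 1) - f t).
have rate_cvg : rate @ 0^' --> 'D_1 f t by exact: f_der.
have coord_cvg := continuous_cvg _ (@coord_continuous R m n i j ('D_1 f t)) rate_cvg.
have rateE : (fun h : R => h^-1 *: (((fun s => f s i j) \o shift t) (h *: 1) - f t i j)) =
    (fun M : 'M[R]_(m, n) => M i j) \o rate.
  by apply: funext => h /=; rewrite !mxE.
apply: DeriveDef.
  by rewrite /derivable rateE; apply/cvg_ex; exists ('D_1 f t i j); exact: coord_cvg.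
by rewrite /derive rateE; apply/cvg_lim => //; exact: coord_cvg.
Qed.

Lemma is_derive_quadform {k} (f : R -> 'cV[R]_k) (P : 'M[R]_k) (t : R) df :
  is_derive t 1 f df ->
  is_derive t 1 (fun s => dotc (f s) (P *m f s)) (dotc (f t) (P *m df) + dotc df (P *m f t)).
Proof.
move=> f_der; pose c (j : 'I_k) (s : R) := f s j 0.
have c_der j : is_derive t 1 (c j) (df j 0) by apply: is_derive_mxE.
pose S (i : 'I_k) : R -> R := \sum_(j < k) (P i j \*: c j).
have SE i s : S i s = \sum_(j < k) P i j * f s j 0 by rewrite /S fct_sumE; apply: eq_bigr.
have -> : (fun s => dotc (f s) (P *m f s)) = \sum_(i < k) (c i * S i).
  apply: funext => s; rewrite fct_sumE dotcE; apply: eq_bigr => i _ /=.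
  by change ((c i * S i) s) with (c i s * S i s); rewrite SE mxE.
have S_der i : is_derive t 1 (S i) (\sum_(j < k) P i j *: df j 0).
  by apply: is_derive_sum => j; apply: is_deriveZ.
apply: is_derive_eq (is_derive_sum (fun i => is_deriveM (c_der i) (S_der i))) _.
rewrite !dotcE -big_split /=; apply: eq_bigr => i _.
rewrite SE /c !mxE /= mulrC; congr (_ + _).
  by rewrite scaler_sumr mulr_suml; apply: eq_bigr => j _; rewrite /GRing.scale /=; ring.
by rewrite /GRing.scale /= mulrC.
Qed.

Lemma is_derive_expRM (a t : R) : is_derive t 1 (fun s => expR (a * s)) (a * expR (a * t)).
Proof.
have lin_der : is_derive t 1 (fun s : R => a * s) a.
  by apply: is_derive_eq (is_deriveZ a (is_derive_id t 1)) _; rewrite /GRing.scale /= mulr1.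
have comp_der : derivable ((@expR R) \o (fun s : R => a * s)) t 1.
  by apply/derivable1_diffP/differentiable_comp; apply/derivable1_diffP.
have comp_val : 'D_1 ((@expR R) \o (fun s : R => a * s)) t = a * expR (a * t).
  rewrite -derive1E derive1_comp // !derive1E [X in X * _]derive_val.
  by rewrite (@derive_val _ _ _ _ _ _ _ lin_der) mulrC.
by have := derivableP comp_der; rewrite comp_val.
Qed.

End Derivatives.

Section Comparison.
Context {R : realType}.

(* Integrating factor: [(V - c/a) e^(a s)] is nonincreasing, so [V - c/a] decays like [e^(-a s)]. *)
Lemma ultimate_bound_of_derive_le (V dV : R -> R) (a c : R) : 0 < a ->
  (forall t : R, 0 < t -> is_derive t 1 V (dV t)) ->
  (forall t : R, 0 < t -> dV t <= - a * V t + c) ->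
  forall eps : R, 0 < eps -> exists T : R, 0 <= T /\ forall t, T <= t -> V t <= c / a + eps.
Proof.
move=> a_gt0 V_der dV_le eps eps_gt0; set L := c / a.
pose h s := (V s - L) * expR (a * s).
pose dh s := (V s - L) * (a * expR (a * s)) + expR (a * s) * dV s.
have h_der (s : R) : 0 < s -> is_derive s 1 h (dh s).
  move=> s_gt0; apply: is_derive_eq.
  - exact: (is_deriveM (is_deriveB (V_der s s_gt0) (is_derive_cst L s 1)) (is_derive_expRM a s)).
  - by rewrite /dh subr0 /GRing.scale.
have dh_le0 (s : R) : 0 < s -> dh s <= 0.
  move=> s_gt0; have dhE : dh s = expR (a * s) * (dV s + a * V s - a * L) by rewrite /dh; ring.
  rewrite dhE pmulr_rle0 ?expR_gt0 // subr_le0 /L mulrCA divff ?gt_eqF // mulr1.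
  by have := dV_le s s_gt0; lra.
have h_nincr (t : R) : 1 <= t -> h t <= h 1.
  apply: (ler0_derive1_nincry (a := 1)) => // [x|x|].
  - by rewrite in_itv /= andbT => x_gt1; apply: (@ex_derive _ _ _ _ _ _ (dh x)); apply: h_der; lra.
  - rewrite in_itv /= andbT => x_gt1; have x_gt0 : 0 < x by lra.
    by rewrite derive1E (@derive_val _ _ _ _ _ _ _ (h_der x x_gt0)) dh_le0.
  - apply: derivable_within_continuous => x; rewrite in_itv /= andbT => x_ge1.
    by apply: (@ex_derive _ _ _ _ _ _ (dh x)); apply: h_der; lra.
pose D := `|h 1|.
have aeps_gt0 : 0 < a * eps by rewrite mulr_gt0.
exists (1 + D / (a * eps)); split; first by rewrite addr_ge0 // divr_ge0 ?normr_ge0 ?ltW.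
move=> t tT.
have t_ge1 : 1 <= t.
  have : 0 <= D / (a * eps) by rewrite divr_ge0 ?normr_ge0 ?ltW.
  lra.
have ht : (V t - L) * expR (a * t) <= D := le_trans (h_nincr t t_ge1) (ler_norm _).
have D_le : D <= eps * (a * t).
  have : D / (a * eps) <= t by lra.
  rewrite ler_pdivrMr // => D_le; lra.
have at_le : eps * (a * t) <= eps * expR (a * t).
  by rewrite ler_wpM2l ?(ltW eps_gt0) //; apply: le_trans (expR_ge1Dx _); lra.
by rewrite -lerBlDl -(ler_pM2r (expR_gt0 (a * t))); lra.
Qed.

End Comparison.

Section PositiveDefinite.
Context {R : realType} {k : nat}.
Implicit Types (K Q : 'M[R]_k) (x y w v : 'cV[R]_k).

Lemma posdef_quadform_ge0 K y : posdef K -> 0 <= dotc y (K *m y).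
Proof.
case=> _ K_pd; have [->|yn0] := eqVneq y 0; first by rewrite dotc0l.
exact/ltW/K_pd.
Qed.

Lemma posdef_unitmx K : posdef K -> K \in unitmx.
Proof.
move=> [sK K_pd]; have : ~~ eigenvalue K 0.
  apply/negP => /(sym_eigenvector _ _ sK) [x xn0 Kx].
  by have := K_pd x xn0; rewrite Kx scale0r dotc0r ltxx.
by rewrite eigenvalue_unitmx negbK raddf0 subr0.
Qed.

Lemma dotc_young_posdef K w y (a : R) : posdef K ->
  2 * a * dotc w y <= a ^+ 2 * dotc y (K *m y) + dotc w (invmx K *m w).
Proof.
move=> K_pd; have [sK _] := K_pd; set z := invmx K *m w.
have Kz : K *m z = w by rewrite mulKVmx // posdef_unitmx.
have := posdef_quadform_ge0 _ (a *: y - z) K_pd.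
rewrite mulmxBr -scalemxAr Kz !dotcBl !dotcZl !dotcBr !dotcZr (dotc_sym _ z y sK) Kz.
rewrite (dotcC y w) (dotcC w z); lra.
Qed.

Lemma quadform_rank_one_update Q (phi : R) v x :
  dotc x ((Q + phi *: (v *m v^T)) *m x) = dotc x (Q *m x) + phi * dotc v x ^+ 2.
Proof.
have vvx : v^T *m x = (dotc v x)%:M.
  by apply/matrixP => i j; rewrite !ord1 /dotc [RHS]mxE eqxx mulr1n.
by rewrite mulmxDl -scalemxAl -mulmxA vvx mul_mx_scalar dotcDr !dotcZr (dotcC x v) expr2 mulrA.
Qed.

Hypothesis k_gt0 : (0 < k)%N.

Lemma gfun_le_quadform Q (phi : R) v x : Q^T = Q ->
  gfun phi Q v * dotc x x <= dotc x (Q *m x) + phi * dotc v x ^+ 2.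
Proof.
move=> sQ; rewrite -quadform_rank_one_update; apply: lambda_min_le_quadform k_gt0 _ x.
by rewrite linearD linearZ /= trmx_mul trmxK sQ.
Qed.

Lemma gfun_gt0 Q (phi : R) v : posdef Q -> 0 <= phi -> 0 < gfun phi Q v.
Proof.
move=> [sQ Q_pd] phi_ge0; apply: (lambda_min_gt0 k_gt0); split.
  by rewrite /Defs.symmetric linearD linearZ /= trmx_mul trmxK sQ.
move=> x xn0; rewrite quadform_rank_one_update ltr_wpDr ?Q_pd //.
by rewrite mulr_ge0 ?sqr_ge0.
Qed.

End PositiveDefinite.

Lemma lyapunov_derivativeE {R : realType} {k} (A P Q : 'M[R]_k) (b x : 'cV[R]_k) (w : R) :
  P^T = P -> Q = - (A^T *m P + P *m A) ->
  dotc x (P *m (A *m x + w *: b)) + dotc (A *m x + w *: b) (P *m x) =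
    - dotc x (Q *m x) + 2 * w * dotc (P *m b) x.
Proof.
move=> sP ->; set y := A *m x + w *: b.
have yPx : dotc y (P *m x) = dotc x (P *m y) by rewrite (dotc_sym _ y x sP) dotcC.
have ATP : dotc x (A^T *m P *m x) = dotc x (P *m (A *m x)).
  by rewrite -mulmxA dotc_mulmx trmxK (dotc_sym _ _ x sP) dotcC.
rewrite yPx mulNmx dotcNr opprK mulmxDl dotcDr ATP -mulmxA /y mulmxDr -scalemxAr.
by rewrite dotcDr dotcZr (dotcC x (P *m b)); ring.
Qed.

Lemma update_law_input {R : realType} {n nb} (alpha : R) (K : 'M[R]_nb) (b : 'cV[R]_nb)
    (B : 'cV[R]_n) (P : 'M[R]_n) (x : 'cV[R]_n) : P^T = P ->
  dotc ((alpha *: K) *m b *m (B^T *m P *m x)) b = alpha * dotc (P *m B) x * dotc b (K *m b).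
Proof.
move=> sP; have -> : B^T *m P *m x = (dotc (P *m B) x)%:M.
  by apply/matrixP => i j; rewrite !ord1 [RHS]mxE eqxx mulr1n /dotc trmx_mul sP.
by rewrite mul_mx_scalar -scalemxAl !dotcZl (dotcC _ b); ring.
Qed.

Lemma adaptive_input_bound {R : realType} (alpha bb gamma q s wb et es cW : R) :
  0 < alpha -> 0 < bb -> gamma < 1 -> bb <= q -> `|et| <= es ->
  2 * (alpha * s) * wb <= (alpha * s) ^+ 2 * q + cW ->
  2 * (- (alpha * s * q) + wb + et) * s <=
    - (alpha * bb * gamma) * s ^+ 2 + (cW + es ^+ 2 / (bb * (1 - gamma))) / alpha.
Proof.
move=> alpha_gt0 bb_gt0 gamma_lt1 bb_le_q /ler_normlP [et_le1 et_le2] young.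
set d := bb * (1 - gamma); have d_gt0 : 0 < d by rewrite mulr_gt0 // subr_gt0.
have ad_gt0 : 0 < alpha * d by rewrite mulr_gt0.
have wb_le : 2 * s * wb <= alpha * s ^+ 2 * q + cW / alpha.
  rewrite -(ler_pM2l alpha_gt0) mulrDr [alpha * (cW / alpha)]mulrC divfK ?gt_eqF //.
  by move: young; rewrite !expr2; lra.
(* Young's inequality weighted by [alpha * d]: the share of [alpha * bb * s^2] given up. *)
have et_le : 2 * s * et <= alpha * d * s ^+ 2 + es ^+ 2 / (alpha * d).
  rewrite -(ler_pM2l ad_gt0) mulrDr [alpha * d * (_ / _)]mulrC divfK ?gt_eqF //.
  have := sqr_ge0 (alpha * d * s - et); rewrite !expr2; nra.
have q_ge : alpha * s ^+ 2 * bb <= alpha * s ^+ 2 * q.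
  by rewrite ler_wpM2l // mulr_ge0 ?sqr_ge0 // ltW.
have -> : (cW + es ^+ 2 / d) / alpha = cW / alpha + es ^+ 2 / (alpha * d).
  by field; rewrite !gt_eqF.
move: wb_le et_le q_ge; rewrite /d !expr2; lra.
Qed.

Section ClosedLoop.
Variables (R : realType) (n nb : nat) (A P Q : 'M[R]_n) (B : 'cV[R]_n) (Kb : 'M[R]_nb)
  (beta : 'cV[R]_n -> 'cV[R]_nb) (W : 'cV[R]_nb) (alpha etastar gamma : R).
Hypotheses (n_gt0 : (0 < n)%N) (alpha_gt0 : 0 < alpha) (Kb_pd : posdef Kb)
  (P_pd : posdef P) (Q_pd : posdef Q) (lyapunov_eq : Q = - (A^T *m P + P *m A))
  (gamma_ge0 : 0 <= gamma) (gamma_lt1 : gamma < 1).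

Local Notation bb := (inf (range (fun x : 'cV[R]_n => dotc (beta x) (Kb *m beta x)))).
Hypothesis bb_gt0 : 0 < bb.

Local Notation closed_loop x et :=
  (A *m x + (- dotc ((alpha *: Kb) *m beta x *m (B^T *m P *m x)) (beta x)
              + dotc W (beta x) + et) *: B).

Lemma lyapunov_rate_bound (x : 'cV[R]_n) (et : R) : `|et| <= etastar ->
  dotc x (P *m closed_loop x et) + dotc (closed_loop x et) (P *m x) <=
    - (gfun (alpha * bb * gamma) Q (P *m B) / lambda_max P) * dotc x (P *m x) +
    (dotc W (invmx Kb *m W) + etastar ^+ 2 / (bb * (1 - gamma))) / alpha.
Proof.
move=> et_le; have [sP _] := P_pd; have [sQ _] := Q_pd.
set g := gfun _ Q _; set s := dotc (P *m B) x; set q := dotc (beta x) (Kb *m beta x).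
have bb_le_q : bb <= q.
  apply: ge_inf; last by exists x.
  by exists 0 => _ [y _ <-]; apply: posdef_quadform_ge0.
have g_gt0 : 0 < g by apply: gfun_gt0 => //; rewrite !mulr_ge0 // ltW.
have lM_gt0 : 0 < lambda_max P.
  exact: lt_le_trans (lambda_min_gt0 n_gt0 _ P_pd) (lambda_min_le_max n_gt0 _ sP).
have V_le : g / lambda_max P * dotc x (P *m x) <= g * dotc x x.
  rewrite mulrAC ler_pdivrMr // -mulrA ler_wpM2l ?(ltW g_gt0) // mulrC.
  exact: quadform_le_lambda_max.
have input_le := adaptive_input_bound _ _ _ _ s (dotc W (beta x)) _ _ _ alpha_gt0 bb_gt0
  gamma_lt1 bb_le_q et_le (dotc_young_posdef _ W (beta x) (alpha * s) Kb_pd).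
have rate_le := gfun_le_quadform n_gt0 _ (alpha * bb * gamma) (P *m B) x sQ.
rewrite (lyapunov_derivativeE _ _ _ _ _ _ sP lyapunov_eq) // update_law_input // -/s -/q.
rewrite -/g -/s in rate_le; lra.
Qed.

End ClosedLoop.

Arguments lyapunov_rate_bound {R n nb A P Q B Kb beta W alpha etastar gamma}.

Theorem mainTheorem4 (R : realType) (n nb : nat)
  (A : 'M[R]_n) (B : 'cV[R]_n) (beta : 'cV[R]_n -> 'cV[R]_nb)
  (W : 'cV[R]_nb) (eta : R -> R) (e : R -> 'cV[R]_n)
  (P Q : 'M[R]_n) (Kb : 'M[R]_nb) (alpha etastar gamma mu : R) :
  hurwitz A ->
  (* Assumption 1 *)
  (exists alpha_beta : R -> R,
      nondecreasing_on_nonneg alpha_beta /\ (forall x, 0 <= x -> 0 <= alpha_beta x) /\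
      forall x, enorm (beta x) <= alpha_beta (enorm x)) ->
  0 < alpha -> posdef Kb ->
  posdef P -> posdef Q -> Q = - (A^T *m P + P *m A) ->
  0 < inf (range (fun x : 'cV[R]_n => dotc (beta x) (Kb *m beta x))) ->
  (forall t, 0 <= t -> `|eta t| <= etastar) ->
  0 <= gamma -> gamma < 1 -> 0 < mu ->
  (* e is a closed-loop solution on [0, oo) with
     u_adapt = - What^T beta(e),  What = K beta(e) B^T P e,  K = alpha Kb *)
  (forall t, 0 < t ->
     let What := (alpha *: Kb) *m beta (e t) *m (B^T *m P *m e t) in
     let u := - dotc What (beta (e t)) in
     is_derive t 1 e (A *m e t + (u + dotc W (beta (e t)) + eta t) *: B)) ->
  let bb := inf (range (fun x : 'cV[R]_n => dotc (beta x) (Kb *m beta x))) in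
  let re := Num.sqrt (lambda_max P /
                       (gfun (alpha * bb * gamma) Q (P *m B) * lambda_min P)) *
            Num.sqrt ((dotc W (invmx Kb *m W) + etastar ^+ 2 / (bb * (1 - gamma)))
                        / alpha + mu) in
  exists Te : R, 0 <= Te /\ forall t, Te <= t -> enorm (e t) <= re.
Proof.
(* Hurwitzness of A and Assumption 1 only serve the existence of P and of solutions. *)
move=> _ _ alpha_gt0 Kb_pd P_pd Q_pd lyapunov_eq bb_gt0 eta_le gamma_ge0 gamma_lt1 mu_gt0
  e_der bb re.
have [n0|n_gt0] := posnP n.
  exists 0; split => // t _; have -> : e t = 0.
    by apply/matrixP => -[i hi]; have : (i < 0)%N by rewrite -n0.
  by rewrite /enorm dotc0l sqrtr0 /re mulr_ge0 ?sqrtr_ge0.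
have [sP _] := P_pd.
pose g := gfun (alpha * bb * gamma) Q (P *m B); pose lM := lambda_max P; pose lm := lambda_min P.
pose C := (dotc W (invmx Kb *m W) + etastar ^+ 2 / (bb * (1 - gamma))) / alpha.
have lm_gt0 : 0 < lm := lambda_min_gt0 n_gt0 _ P_pd.
have lM_gt0 : 0 < lM := lt_le_trans lm_gt0 (lambda_min_le_max n_gt0 _ sP).
have g_gt0 : 0 < g by apply: gfun_gt0 => //; rewrite !mulr_ge0 // ltW.
have [|T [T_ge0 V_le]] := ultimate_bound_of_derive_le _ _ _ _ (divr_gt0 g_gt0 lM_gt0)
  (fun t t_gt0 => is_derive_quadform _ P _ _ (e_der t t_gt0))
  (fun t t_gt0 => lyapunov_rate_bound n_gt0 alpha_gt0 Kb_pd P_pd Q_pd lyapunov_eq gamma_ge0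
                    gamma_lt1 bb_gt0 (e t) (eta t) (eta_le t (ltW t_gt0))) (lM * mu / g).
  by rewrite !divr_gt0 // mulr_gt0.
exists T; split => // t /V_le Vt.
have e_le : dotc (e t) (e t) <= lM / (g * lm) * (C + mu).
  rewrite -(ler_pM2l lm_gt0); apply: le_trans (lambda_min_le_quadform n_gt0 sP _) _.
  apply: le_trans Vt _; rewrite -/C; clearbody g lM lm C.
  by rewrite (_ : lm * _ = C / (g / lM) + lM * mu / g) //; field; rewrite !gt_eqF.
rewrite /enorm /re -/g -/lM -/lm -/C -sqrtrM; first exact: ler_wsqrtr.
by rewrite divr_ge0 ?mulr_ge0 // ltW.
Qed.
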